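(* For all integers $n\ge1$ and real numbers $x\in(0,1)$, $$\arccos(x)<\int_x^1\frac{U_{2n}(t)}{\sqrt{1-t^2}}\,dt<\pi-\arccos(x).$$ If $x\in(-1,0)$, then both inequalities hold reversed, i.e. $\arccos(x)>\int_x^1\frac{U_{2n}(t)}{\sqrt{1-t^2}}\,dt>\pi-\arccos(x)$.
   Context: $U_j$ denotes the Chebyshev polynomial of the second kind of degree $j$, i.e. $U_j(\cos t)=\sin((j+1)t)/\sin t$ for $t\in[0,\pi]$. *)

From Stdlib Require Import Reals Lra.
Open Scope R_scope.

(* Chebyshev polynomials of the second kind, via the standard recurrence
   U_0 = 1, U_1 = 2t, U_{j+2} = 2t U_{j+1} - U_j
   (equivalently U_j(cos s) = sin((j+1)s)/sin s). *)
Fixpoint chebU (j : nat) (t : R) : R :=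
  match j with
  | O => 1
  | S m =>
    match m with
    | O => 2 * t
    | S k => 2 * t * chebU m t - chebU k t
    end
  end.

(* Improper Riemann integral with (possible) singularity at the upper
   endpoint 1:  int_a^1 f = l  means f is Riemann integrable on [a,b]
   for every a <= b < 1 and  int_a^b f -> l  as b -> 1^-. *)
Definition improper_int_to_1 (f : R -> R) (a l : R) : Prop :=
  (forall b, a <= b < 1 -> inhabited (Riemann_integrable f a b)) /\
  (forall eps, 0 < eps -> exists delta, 0 < delta /\
     forall b (pr : Riemann_integrable f a b),
       a <= b -> 1 - delta < b < 1 -> Rabs (RiemannInt pr - l) < eps).

From Stdlib Require Import Reals Lra Lia.
From Coquelicot Require Import Coquelicot.
Open Scope R_scope.

(* With t = cos s the integrand becomes the Dirichlet kernel
   sin((2n+1)s)/sin s = 1 + 2 sum_{k=1}^n cos(2ks), so the integral equals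
   s + G_n(s) at s = acos x, where G_n(s) = sum_{k=1}^n sin(2ks)/k.  Both
   inequalities for x in (0,1) amount to 0 < G_n(s) < PI - 2s on (0, PI/2).
   Each is proved by induction on n: at an interior critical point c of the
   offending function, G_n'(c) = 2 sum cos(2kc) forces sin((2n+1)c) = +-sin c,
   hence the sign of the last summand sin(2nc)/n, which contradicts the
   induction hypothesis.  The case x in (-1,0) follows from the symmetry
   G_n(PI - s) = - G_n(s). *)

Fixpoint sin_sum (n : nat) (s : R) : R :=
  match n with O => 0 | S m => sin_sum m s + sin (2 * INR (S m) * s) / INR (S m) end.

Fixpoint cos_sum (n : nat) (s : R) : R :=
  match n with O => 0 | S m => cos_sum m s + cos (2 * INR (S m) * s) end.

Lemma sin_sum_derive n s : derivable_pt_lim (sin_sum n) s (2 * cos_sum n s).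
Proof.
  apply is_derive_Reals.
  induction n as [|m IH]; cbn [sin_sum cos_sum].
  - rewrite Rmult_0_r. apply (is_derive_const 0).
  - rewrite Rmult_plus_distr_l.
    apply (is_derive_plus (sin_sum m) (fun s => sin (2 * INR (S m) * s) / INR (S m))); auto.
    assert (Hk : INR (S m) <> 0) by (apply not_0_INR; lia).
    set (k := INR (S m)) in *; clearbody k.
    auto_derive; auto. field; auto.
Qed.

Lemma cos_sum_dirichlet n s :
  2 * sin s * cos_sum n s = sin ((2 * INR n + 1) * s) - sin s.
Proof.
  induction n as [|m IH]; cbn [cos_sum].
  - simpl INR. replace ((2 * 0 + 1) * s) with s by ring. ring.
  - rewrite Rmult_plus_distr_l, IH, S_INR.
    replace ((2 * (INR m + 1) + 1) * s) with (2 * (INR m + 1) * s + s) by ring.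
    replace ((2 * INR m + 1) * s) with (2 * (INR m + 1) * s - s) by ring.
    rewrite sin_plus, sin_minus. ring.
Qed.

Lemma chebU_cos s j : sin s * chebU j (cos s) = sin (INR (S j) * s).
Proof.
  enough (H : sin s * chebU j (cos s) = sin (INR (S j) * s) /\
              sin s * chebU (S j) (cos s) = sin (INR (S (S j)) * s)) by apply H.
  induction j as [|k [IH1 IH2]]; split.
  - simpl. replace (1 * s) with s by ring. ring.
  - simpl. replace ((1 + 1) * s) with (2 * s) by ring. rewrite sin_2a. ring.
  - exact IH2.
  - change (chebU (S (S k)) (cos s)) with (2 * cos s * chebU (S k) (cos s) - chebU k (cos s)).
    replace (sin s * (2 * cos s * chebU (S k) (cos s) - chebU k (cos s)))
      with (2 * cos s * (sin s * chebU (S k) (cos s)) - sin s * chebU k (cos s)) by ring.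
    rewrite IH1, IH2, !S_INR.
    replace ((INR k + 1 + 1 + 1) * s) with ((INR k + 1 + 1) * s + s) by ring.
    replace ((INR k + 1) * s) with ((INR k + 1 + 1) * s - s) by ring.
    rewrite sin_plus, sin_minus. ring.
Qed.

Lemma chebU_even_cos n s : sin s <> 0 -> chebU (2 * n) (cos s) = 1 + 2 * cos_sum n s.
Proof.
  intros Hs. apply (Rmult_eq_reg_l (sin s)); auto.
  rewrite chebU_cos.
  replace (sin s * (1 + 2 * cos_sum n s)) with (sin s + 2 * sin s * cos_sum n s) by ring.
  rewrite cos_sum_dirichlet.
  rewrite S_INR, mult_INR. simpl INR.
  replace ((1 + 1) * INR n + 1) with (2 * INR n + 1) by ring. ring.
Qed.

Lemma continuity_chebU j : continuity (chebU j).
Proof.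
  enough (H : continuity (chebU j) /\ continuity (chebU (S j))) by apply H.
  induction j as [|k [IH1 IH2]]; simpl chebU; split; try exact IH2.
  - apply continuity_const. intros a b; reflexivity.
  - reg.
  - intro t. apply (continuity_pt_minus (fun t => 2 * t * chebU (S k) t) (chebU k)); auto.
    apply (continuity_pt_mult (fun t => 2 * t) (chebU (S k))); auto. reg.
Qed.

Lemma exists_critical_nonpos (f df : R -> R) a b t :
  (forall x, derivable_pt_lim f x (df x)) -> a < t < b -> f t <= 0 ->
  0 <= f a -> 0 <= f b -> exists c, a < c < b /\ f c <= 0 /\ df c = 0.
Proof.
  intros Hd Ht Hft Ha Hb.
  assert (Hcont : forall x, continuity_pt f x).
  { intro x. apply derivable_continuous_pt. exists (df x). apply Hd. }
  destruct (continuity_ab_min f a b) as [m [Hmin Hm]]; [lra | auto |].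
  assert (Hfm : f m <= f t) by (apply Hmin; lra).
  assert (Hc : exists c, a < c < b /\ forall y, a <= y <= b -> f c <= f y).
  { destruct (Rlt_le_dec a m); [destruct (Rlt_le_dec m b)|].
    - exists m. split; [lra | exact Hmin].
    (* a minimum at an endpoint is [<= 0] and [>= 0], so [t] is a minimum too *)
    - exists t. split; [lra|]. replace m with b in * by lra. intros y Hy.
      pose proof (Hmin y Hy). lra.
    - exists t. split; [lra|]. replace m with a in * by lra. intros y Hy.
      pose proof (Hmin y Hy). lra. }
  destruct Hc as [c [Hc Hcmin]].
  exists c. split; [exact Hc|]. split; [pose proof (Hcmin t); lra|].
  pose (pr := exist (fun l => derivable_pt_abs f c l) (df c) (Hd c) : derivable_pt f c).
  change (df c) with (derive_pt f c pr).
  apply (deriv_minimum f a b); try lra.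
  intros; apply Hcmin; lra.
Qed.

Lemma sin_sub_nonneg_of_sin_eq A c :
  0 < c < PI / 2 -> sin A = sin c -> 0 <= sin (A - c).
Proof.
  intros Hc E. rewrite sin_minus, E.
  assert (Hs : 0 < sin c) by (apply sin_gt_0; lra).
  assert (Hco : 0 < cos c) by (apply cos_gt_0; lra).
  pose proof (sin2_cos2 c). pose proof (sin2_cos2 A) as HA. rewrite E in HA. unfold Rsqr in *.
  assert (cos A <= cos c) by nra. nra.
Qed.

Lemma sin_sub_nonpos_of_sin_eq_opp A c :
  0 < c < PI / 2 -> sin A = - sin c -> sin (A - c) <= 0.
Proof.
  intros Hc E. rewrite sin_minus, E.
  assert (Hs : 0 < sin c) by (apply sin_gt_0; lra).
  assert (Hco : 0 < cos c) by (apply cos_gt_0; lra).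
  pose proof (sin2_cos2 c). pose proof (sin2_cos2 A) as HA. rewrite E in HA. unfold Rsqr in *.
  assert (- cos c <= cos A) by nra. nra.
Qed.

Lemma sin_sum_0 n : sin_sum n 0 = 0.
Proof.
  induction n as [|m IH]; cbn [sin_sum]; auto.
  rewrite IH, Rmult_0_r, sin_0. field. apply not_0_INR; lia.
Qed.

Lemma sin_sum_PI2 n : sin_sum n (PI / 2) = 0.
Proof.
  induction n as [|m IH]; cbn [sin_sum]; auto.
  rewrite IH, sin_eq_0_1; [field; apply not_0_INR; lia|].
  exists (Z.of_nat (S m)). rewrite <- INR_IZR_INZ. field.
Qed.

Lemma sin_sum_PI_sub n s : sin_sum n (PI - s) = - sin_sum n s.
Proof.
  induction n as [|m IH]; cbn [sin_sum]; [ring|].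
  rewrite IH.
  replace (2 * INR (S m) * (PI - s)) with (- (2 * INR (S m) * s) + 2 * INR (S m) * PI) by ring.
  rewrite sin_period, sin_neg. field. apply not_0_INR; lia.
Qed.

Lemma sin_sum_pos n s : (1 <= n)%nat -> 0 < s < PI / 2 -> 0 < sin_sum n s.
Proof.
  intros Hn. destruct n as [|m]; [lia|]. clear Hn. revert s.
  induction m as [|m IH]; intros s Hs.
  - simpl. replace (2 * 1 * s) with (2 * s) by ring.
    assert (0 < sin (2 * s)) by (apply sin_gt_0; lra). lra.
  - destruct (Rlt_le_dec 0 (sin_sum (S (S m)) s)) as [H|H]; auto. exfalso.
    destruct (exists_critical_nonpos (sin_sum (S (S m))) (fun s => 2 * cos_sum (S (S m)) s)
                0 (PI / 2) s) as [c [Hc [Hfc Hdc]]]; auto.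
    { intro; apply sin_sum_derive. }
    { rewrite sin_sum_0; lra. }
    { rewrite sin_sum_PI2; lra. }
    set (N := INR (S (S m))) in *.
    assert (Hsin : sin ((2 * N + 1) * c) = sin c).
    { pose proof (cos_sum_dirichlet (S (S m)) c) as D. fold N in D.
      assert (C0 : cos_sum (S (S m)) c = 0) by lra. rewrite C0 in D. lra. }
    assert (Hlast : 0 <= sin (2 * N * c) / N).
    { apply Rle_mult_inv_pos; [| apply lt_0_INR; lia].
      replace (2 * N * c) with ((2 * N + 1) * c - c) by ring.
      exact (sin_sub_nonneg_of_sin_eq _ _ Hc Hsin). }
    change (sin_sum (S (S m)) c) with (sin_sum (S m) c + sin (2 * N * c) / N) in Hfc.
    pose proof (IH c Hc). lra.
Qed.

Lemma sin_sum_lt n s : 0 < s < PI / 2 -> sin_sum n s < PI - 2 * s.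
Proof.
  revert s. induction n as [|m IH]; intros s Hs; [simpl; lra|].
  destruct (Rlt_le_dec (sin_sum (S m) s) (PI - 2 * s)) as [H|H]; auto. exfalso.
  destruct (exists_critical_nonpos (fun s => PI - 2 * s - sin_sum (S m) s)
              (fun s => - 2 - 2 * cos_sum (S m) s) 0 (PI / 2) s)
    as [c [Hc [Hfc Hdc]]]; [| auto | lra | rewrite sin_sum_0; lra | rewrite sin_sum_PI2; lra |].
  { intro x. replace (- 2 - 2 * cos_sum (S m) x) with (0 - 2 * 1 - 2 * cos_sum (S m) x) by ring.
    apply derivable_pt_lim_minus; [| apply sin_sum_derive].
    apply derivable_pt_lim_minus; [apply derivable_pt_lim_const |].
    apply derivable_pt_lim_scal, derivable_pt_lim_id. }
  set (N := INR (S m)) in *.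
  assert (HN : 0 < N) by (apply lt_0_INR; lia).
  assert (Hsin : sin ((2 * N + 1) * c) = - sin c).
  { pose proof (cos_sum_dirichlet (S m) c) as D. fold N in D.
    assert (C1 : cos_sum (S m) c = -1) by lra. rewrite C1 in D. lra. }
  assert (Hlast : sin (2 * N * c) / N <= 0).
  { replace (2 * N * c) with ((2 * N + 1) * c - c) by ring.
    pose proof (sin_sub_nonpos_of_sin_eq_opp _ _ Hc Hsin).
    assert (0 < / N) by (apply Rinv_0_lt_compat; exact HN). unfold Rdiv. nra. }
  change (sin_sum (S m) c) with (sin_sum m c + sin (2 * N * c) / N) in Hfc.
  pose proof (IH c Hc). lra.
Qed.

Lemma Rabs_sin_le z : 0 <= z -> Rabs (sin z) <= z.
Proof.
  intros Hz. apply Rabs_le.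
  destruct (Req_dec z 0) as [->|Hz0]; [rewrite sin_0; lra|].
  pose proof (sin_lt_x z ltac:(lra)). pose proof (SIN_bound z). pose proof PI2_1.
  destruct (Rle_lt_dec 1 z); [lra|].
  pose proof (sin_ge_0 z ltac:(lra) ltac:(lra)). lra.
Qed.

Lemma Rabs_sin_sum_le n s : 0 <= s -> Rabs (sin_sum n s) <= 2 * INR n * s.
Proof.
  intros Hs. induction n as [|m IH]; cbn [sin_sum].
  - rewrite Rabs_R0. simpl. lra.
  - eapply Rle_trans; [apply Rabs_triang|].
    assert (HN : 0 < INR (S m)) by (apply lt_0_INR; lia).
    pose proof (Rabs_sin_le (2 * INR (S m) * s) ltac:(nra)) as Hsin.
    assert (Rabs (sin (2 * INR (S m) * s) / INR (S m)) <= 2 * s).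
    { unfold Rdiv. rewrite Rabs_mult, Rabs_inv, (Rabs_right (INR (S m))) by lra.
      apply (Rmult_le_reg_r (INR (S m))); auto.
      rewrite Rmult_assoc, Rinv_l by lra. lra. }
    rewrite S_INR in *. lra.
Qed.

Lemma acos_lt_of_cos_lt b d : 0 <= d <= PI -> cos d < b <= 1 -> acos b < d.
Proof.
  intros Hd Hb. destruct (Rlt_le_dec (acos b) d) as [|Hle]; auto.
  pose proof (acos_bound b). pose proof (COS_bound d).
  pose proof (cos_decr_1 d (acos b) ltac:(lra) ltac:(lra) ltac:(lra) ltac:(lra) Hle) as Hcos.
  rewrite cos_acos in Hcos; lra.
Qed.

Lemma acos_in_0_PI2 y : 0 < y < 1 -> 0 < acos y < PI / 2.
Proof.
  intros Hy. split; [apply acos_bound_lt; lra|].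
  apply acos_lt_of_cos_lt; [pose proof PI_RGT_0; lra | rewrite cos_PI2; lra].
Qed.

Lemma derivable_pt_lim_acos t : -1 < t < 1 -> derivable_pt_lim acos t (-1 / sqrt (1 - t²)).
Proof.
  intros Ht. pose proof (derive_pt_acos t Ht) as E. unfold derive_pt in E.
  destruct (derivable_pt_acos t Ht) as [l Hl]. simpl in E. subst l. exact Hl.
Qed.

Lemma derivable_pt_lim_acos_sin_sum n t : -1 < t < 1 ->
  derivable_pt_lim (fun t => - (acos t + sin_sum n (acos t))) t
    (chebU (2 * n) t / sqrt (1 - t ^ 2)).
Proof.
  intros Ht.
  pose proof (derivable_pt_lim_acos t Ht) as Ha.
  pose proof (derivable_pt_lim_comp acos (sin_sum n) t _ _ Ha (sin_sum_derive n (acos t))) as Hg.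
  pose proof (derivable_pt_lim_opp _ _ _ (derivable_pt_lim_plus _ _ _ _ _ Ha Hg)) as Hk.
  match type of Hk with derivable_pt_lim _ _ ?l => replace (_ / _) with l; [exact Hk|] end.
  assert (Hs : sin (acos t) <> 0).
  { apply Rgt_not_eq, sin_gt_0; pose proof (acos_bound_lt t Ht); lra. }
  replace (chebU (2 * n) t) with (chebU (2 * n) (cos (acos t))) by (rewrite cos_acos; lra).
  rewrite (chebU_even_cos n _ Hs).
  replace (1 - t²) with (1 - t ^ 2) by (unfold Rsqr; ring).
  assert (0 < sqrt (1 - t ^ 2)) by (apply sqrt_lt_R0; nra).
  field. lra.
Qed.

Lemma continuity_pt_chebU_weighted n t : -1 < t < 1 ->
  continuity_pt (fun t => chebU (2 * n) t / sqrt (1 - t ^ 2)) t.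
Proof.
  intros Ht.
  apply (continuity_pt_div (chebU (2 * n)) (fun t => sqrt (1 - t ^ 2))).
  - apply continuity_chebU.
  - apply (continuity_pt_comp (fun t => 1 - t ^ 2) sqrt); [reg|].
    apply continuity_pt_sqrt. nra.
  - apply Rgt_not_eq, sqrt_lt_R0. nra.
Qed.

Lemma improper_int_to_1_antiderivative (f F : R -> R) (a L : R) :
  (forall t, a <= t < 1 -> continuity_pt f t) ->
  (forall t, a <= t < 1 -> derivable_pt_lim F t (f t)) ->
  (forall eps, 0 < eps -> exists delta, 0 < delta /\
     forall b, 1 - delta < b < 1 -> Rabs (F b - L) < eps) ->
  improper_int_to_1 f a (L - F a).
Proof.
  intros Hf HF HL. split.
  - intros b Hb. constructor. apply continuity_implies_RiemannInt; [lra|].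
    intros; apply Hf; lra.
  - intros eps Heps. destruct (HL eps Heps) as [delta [Hdelta Hb]].
    exists delta. split; [exact Hdelta|]. intros b pr Hab Hb1.
    rewrite <- (RInt_Reals _ a b pr).
    rewrite (is_RInt_unique _ a b (minus (F b) (F a))).
    2: { apply (is_RInt_derive F f); rewrite Rmin_left, Rmax_right by lra; intros y Hy.
         - apply is_derive_Reals, HF. lra.
         - apply continuity_pt_filterlim, Hf. lra. }
    change (minus (F b) (F a)) with (F b - F a).
    replace (F b - F a - (L - F a)) with (F b - L) by ring.
    exact (Hb b Hb1).
Qed.

Lemma acos_sin_sum_cvg_1 n eps : 0 < eps -> exists delta, 0 < delta /\
  forall b, 1 - delta < b < 1 -> Rabs (acos b + sin_sum n (acos b)) < eps.
Proof.
  intros Heps.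
  assert (HK : 0 < 1 + 2 * INR n) by (pose proof (pos_INR n); lra).
  set (d := Rmin 1 (eps / (1 + 2 * INR n))).
  assert (Hd0 : 0 < d) by (apply Rmin_glb_lt; [lra | apply Rdiv_lt_0_compat; lra]).
  assert (Hd1 : d <= 1) by (apply Rmin_l).
  assert (Hd2 : d <= eps / (1 + 2 * INR n)) by (apply Rmin_r).
  pose proof PI2_1.
  exists (1 - cos d). split.
  { pose proof (cos_decreasing_1 0 d ltac:(lra) ltac:(lra) ltac:(lra) ltac:(lra) Hd0) as Hcos.
    rewrite cos_0 in Hcos. lra. }
  intros b Hb.
  assert (Hacos : acos b < d) by (apply acos_lt_of_cos_lt; lra).
  pose proof (acos_bound b). pose proof (Rabs_sin_sum_le n (acos b) (proj1 (acos_bound b))).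
  eapply Rle_lt_trans; [apply Rabs_triang|]. rewrite (Rabs_right (acos b)) by lra.
  assert ((1 + 2 * INR n) * d <= eps).
  { apply (Rmult_le_reg_r (/ (1 + 2 * INR n))); [apply Rinv_0_lt_compat; lra|].
    rewrite Rmult_comm, <- Rmult_assoc, Rinv_l by lra. lra. }
  nra.
Qed.

Lemma improper_int_chebU_even n x : -1 < x < 1 ->
  improper_int_to_1 (fun t => chebU (2 * n) t / sqrt (1 - t ^ 2)) x
    (acos x + sin_sum n (acos x)).
Proof.
  intros Hx.
  replace (acos x + sin_sum n (acos x)) with (0 - - (acos x + sin_sum n (acos x))) by ring.
  apply (improper_int_to_1_antiderivative _ (fun t => - (acos t + sin_sum n (acos t)))).
  - intros t Ht. apply continuity_pt_chebU_weighted. lra.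
  - intros t Ht. apply derivable_pt_lim_acos_sin_sum. lra.
  - intros eps Heps. destruct (acos_sin_sum_cvg_1 n eps Heps) as [delta [Hdelta Hb]].
    exists delta. split; [exact Hdelta|]. intros b Hb1.
    rewrite Rminus_0_r, Rabs_Ropp. exact (Hb b Hb1).
Qed.

Theorem theorem4p3 :
  forall (n : nat) (x : R), (1 <= n)%nat ->
    (0 < x < 1 ->
       exists I, improper_int_to_1 (fun t => chebU (2 * n) t / sqrt (1 - t ^ 2)) x I /\
                 acos x < I < PI - acos x) /\
    (-1 < x < 0 ->
       exists I, improper_int_to_1 (fun t => chebU (2 * n) t / sqrt (1 - t ^ 2)) x I /\
                 acos x > I /\ I > PI - acos x).
Proof.
  intros n x Hn. split; intros Hx;
    exists (acos x + sin_sum n (acos x)); (split; [apply improper_int_chebU_even; lra|]).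
  - pose proof (acos_in_0_PI2 x Hx) as Hs.
    pose proof (sin_sum_pos n _ Hn Hs). pose proof (sin_sum_lt n _ Hs). lra.
  - pose proof (acos_in_0_PI2 (- x) ltac:(lra)) as Hs.
    replace (acos x) with (PI - acos (- x)) by (rewrite acos_opp; ring).
    rewrite sin_sum_PI_sub.
    pose proof (sin_sum_pos n _ Hn Hs). pose proof (sin_sum_lt n _ Hs). lra.
Qed.
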